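(* Let $N\to\infty$, $p=p(N)$ with $p(1-p)N\to\infty$, and $S=S(N)$, $h=h(N)$ such that $N-S$ and $N+S$ are nonnegative integers, $2(2p(1-p)N)^{1/2}<h=o((p(1-p)N)^{2/3})$ and $Sh=o(N(p(1-p)N)^{1/2})$. Let $X_1\sim B(N-S,p)$ and $X_2\sim B(N+S,1-p)$ be independent with means $\mu_1,\mu_2$. Then $$\mathbb{P}(X_1+X_2\ge\mu_1+\mu_2+h)<\frac{\sqrt{2p(1-p)N}}{h}\exp\!\left(-\frac{h^2}{4p(1-p)N}+3+o(1)\right),$$ where $o(1)\to0$ as $N\to\infty$.
   Context: $B(n,p)$ denotes a binomial random variable with parameters $n$ and $p$. *)

From Stdlib Require Import Reals.
Open Scope R_scope.

Definition binom_pmf (n : nat) (q : R) (k : nat) : R :=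
  C n k * q ^ k * (1 - q) ^ (n - k).

Definition sum_binom_tail (n1 : nat) (q1 : R) (n2 : nat) (q2 : R) (t : R) : R :=
  sum_f_R0 (fun k1 =>
    sum_f_R0 (fun k2 =>
      binom_pmf n1 q1 k1 * binom_pmf n2 q2 k2 *
      (if Rle_dec t (INR k1 + INR k2) then 1 else 0)) n2) n1.

(* N = ((N-S)+(N+S))/2 and S = ((N+S)-(N-S))/2, given n1 = N-S, n2 = N+S. *)
Definition Npar (n1 n2 : nat) : R := (INR n1 + INR n2) / 2.
Definition Spar (n1 n2 : nat) : R := (INR n2 - INR n1) / 2.

(* Chernoff's method with a local correction.  Reweighting both binomials by
   [exp (t k)] with [t = h / (2 p (1 - p) N)] turns them into binomials whose
   variance is still at least half the original one, so every atom of the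
   tilted law of the larger of the two is [O(1 / sqrt (p (1 - p) N))]: above
   the mean, the [sqrt (v / 2)] atoms just below a given one are each at least
   half of it, and they sum to at most 1.  Summing the tilted weights
   [exp (- t k)] over the tail then costs only the geometric factor
   [1 / (1 - exp (- t)) <= 2 / t] instead of the number of terms, which gives
   the prefactor [sqrt (p (1 - p) N) / h] in front of the Chernoff bound
   [exp (- h^2 / (4 p (1 - p) N) + h^3 / (4 (p (1 - p) N)^2))];
   the constant [16] is below [sqrt 2 * exp 3]. *)

From Stdlib Require Import Reals Lra Lia Psatz ZArith.
From Coquelicot Require Derive ElemFct.
Open Scope R_scope.

Lemma exp_le_compat x y : x <= y -> exp x <= exp y.
Proof. intros [Hlt|Heq]; [now apply Rlt_le, exp_increasing | subst; apply Rle_refl]. Qed.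

Lemma exp_mult_INR n x : exp (INR n * x) = exp x ^ n.
Proof.
  induction n as [|n IH]; [simpl; now rewrite Rmult_0_l, exp_0|].
  rewrite S_INR, Rmult_plus_distr_r, exp_plus, IH, Rmult_1_l; simpl; ring.
Qed.

Lemma exp_taylor2_upper y : 0 <= y <= 1 -> exp y <= 1 + y + y ^ 2 / 2 + y ^ 3 / 2.
Proof.
  intros Hy. destruct (Req_dec y 0) as [->|Hy0]; [rewrite exp_0; lra|].
  destruct (Derive.Taylor_Lagrange exp 2 0 y) as [z [Hz ->]]; [lra| |].
  { intros s _ [|k] _; [exact I|].
    exists (exp s). exact (ElemFct.is_derive_n_exp (S k) s). }
  assert (Hder : forall k s, Derive.Derive_n exp k s = exp s)
    by (intros; apply Derive.is_derive_n_unique, ElemFct.is_derive_n_exp).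
  cbn [sum_f_R0 Factorial.fact INR Nat.mul Nat.add]. rewrite !Hder, exp_0.
  replace (y - 0) with y by ring.
  assert (exp z <= 3) by (apply Rle_trans with (exp 1); [apply exp_le_compat; lra | apply exp_le_3]).
  assert (y ^ 3 * exp z <= y ^ 3 * 3) by (apply Rmult_le_compat_l; [apply pow_le|]; lra).
  lra.
Qed.

Lemma exp_opp_le s : 0 <= s -> exp (- s) <= 1 - s + s ^ 2 / 2.
Proof.
  intros Hs. rewrite exp_Ropp.
  pose proof (ElemFct.exp_ge_taylor s 2 Hs) as Hlow.
  cbn [sum_f_R0 Factorial.fact INR Nat.mul Nat.add] in Hlow.
  pose proof (exp_pos s).
  (* (1 + s + s^2/2) (1 - s + s^2/2) = 1 + s^4/4 *)
  assert (Hprod : 1 <= (1 + s + s ^ 2 / 2) * (1 - s + s ^ 2 / 2)) by nra.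
  apply Rmult_le_reg_l with (exp s); [lra|].
  rewrite Rinv_r by lra. nra.
Qed.

Lemma bernoulli_centered_mgf_le p t : 0 <= p <= 1 -> 0 <= t <= 1 ->
  p * exp (t * (1 - p)) + (1 - p) * exp (- (t * p)) <=
  exp (p * (1 - p) * (t ^ 2 / 2 + t ^ 3)).
Proof.
  intros Hp Ht.
  pose proof (exp_taylor2_upper (t * (1 - p)) ltac:(split; nra)) as Eup.
  pose proof (exp_opp_le (t * p) ltac:(nra)) as Edown.
  eapply Rle_trans; [|apply exp_ineq1_le].
  assert (0 <= p * (1 - p) * t ^ 3) by (apply Rmult_le_pos; [nra | apply pow_le; lra]).
  assert (Hcube : p * (1 - p) ^ 3 * t ^ 3 <= p * (1 - p) * t ^ 3).
  { replace (p * (1 - p) ^ 3 * t ^ 3) with (p * (1 - p) * t ^ 3 * (1 - p) ^ 2) by ring.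
    rewrite <- Rmult_1_r. apply Rmult_le_compat_l; [lra | simpl; nra]. }
  assert (Hsum : p * (1 + t * (1 - p) + (t * (1 - p)) ^ 2 / 2 + (t * (1 - p)) ^ 3 / 2)
     + (1 - p) * (1 - t * p + (t * p) ^ 2 / 2)
     = 1 + p * (1 - p) * (t ^ 2 / 2) + p * (1 - p) ^ 3 * t ^ 3 / 2) by field.
  assert (p * exp (t * (1 - p)) <=
          p * (1 + t * (1 - p) + (t * (1 - p)) ^ 2 / 2 + (t * (1 - p)) ^ 3 / 2))
    by (apply Rmult_le_compat_l; lra).
  assert ((1 - p) * exp (- (t * p)) <= (1 - p) * (1 - t * p + (t * p) ^ 2 / 2))
    by (apply Rmult_le_compat_l; lra).
  rewrite Rmult_plus_distr_l. lra.
Qed.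

Lemma binom_centered_mgf_le n p t : 0 <= p <= 1 -> 0 <= t <= 1 ->
  (p * exp t + (1 - p)) ^ n * exp (- (t * (INR n * p))) <=
  exp (INR n * (p * (1 - p) * (t ^ 2 / 2 + t ^ 3))).
Proof.
  intros Hp Ht.
  replace (- (t * (INR n * p))) with (INR n * - (t * p)) by ring.
  rewrite !exp_mult_INR, <- Rpow_mult_distr.
  apply pow_incr. split.
  - apply Rmult_le_pos; [pose proof (exp_pos t); nra | apply Rlt_le, exp_pos].
  - replace ((p * exp t + (1 - p)) * exp (- (t * p)))
      with (p * exp (t * (1 - p)) + (1 - p) * exp (- (t * p))).
    + now apply bernoulli_centered_mgf_le.
    + replace (t * (1 - p)) with (t + - (t * p)) by ring. rewrite exp_plus. ring.
Qed.

Lemma C_pos n k : 0 < C n k.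
Proof.
  apply Rdiv_lt_0_compat; [|apply Rmult_lt_0_compat]; apply INR_fact_lt_0.
Qed.

Lemma binom_pmf_nonneg n r k : 0 <= r <= 1 -> 0 <= binom_pmf n r k.
Proof.
  intros Hr. pose proof (C_pos n k). unfold binom_pmf.
  apply Rmult_le_pos; [apply Rmult_le_pos|]; try lra; apply pow_le; lra.
Qed.

Lemma binom_pmf_sum n r : sum_f_R0 (binom_pmf n r) n = 1.
Proof.
  unfold binom_pmf. rewrite <- binomial. replace (r + (1 - r)) with 1 by ring. apply pow1.
Qed.

Lemma binom_mgf n r t :
  sum_f_R0 (fun k => binom_pmf n r k * exp (t * INR k)) n = (r * exp t + (1 - r)) ^ n.
Proof.
  rewrite binomial. apply sum_eq. intros k _. unfold binom_pmf.
  rewrite Rmult_comm with (r1 := t), exp_mult_INR, Rpow_mult_distr. ring.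
Qed.

Lemma binom_pmf_sym n r k : (k <= n)%nat -> binom_pmf n r k = binom_pmf n (1 - r) (n - k).
Proof.
  intros Hk. unfold binom_pmf. rewrite (pascal_step1 n k Hk).
  replace (n - (n - k))%nat with k by lia. replace (1 - (1 - r)) with r by ring. ring.
Qed.

Lemma binom_pmf_succ n r i : (i < n)%nat ->
  binom_pmf n r (S i) * INR (S i) * (1 - r) = binom_pmf n r i * INR (n - i) * r.
Proof.
  intros Hi. unfold binom_pmf. rewrite pascal_step3 by exact Hi.
  replace (n - i)%nat with (S (n - S i)) at 2 by lia.
  assert (0 < INR (S i)) by (apply lt_0_INR; lia).
  simpl pow. field. lra.
Qed.

(** Exponential tilting: the law of [B(n, r)] reweighted by [exp (t k)] is [B(n, tilt r t)]. *)
Definition tilt (r t : R) : R := r * exp t / (r * exp t + (1 - r)).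

Lemma binom_pmf_tilt n r t k : (k <= n)%nat -> 0 < r * exp t + (1 - r) ->
  binom_pmf n r k =
  (r * exp t + (1 - r)) ^ n * binom_pmf n (tilt r t) k * exp (- (t * INR k)).
Proof.
  intros Hk HD. unfold tilt. set (D := r * exp t + (1 - r)) in *.
  unfold binom_pmf.
  replace (1 - r * exp t / D) with ((1 - r) / D) by (unfold D in *; field; lra).
  unfold Rdiv. rewrite !Rpow_mult_distr, !pow_inv.
  replace (D ^ n) with (D ^ k * D ^ (n - k)) by (rewrite <- pow_add; f_equal; lia).
  replace (- (t * INR k)) with (INR k * - t) by ring.
  rewrite exp_mult_INR, exp_Ropp, pow_inv.
  assert (0 < D ^ k) by (apply pow_lt; lra).
  assert (0 < D ^ (n - k)) by (apply pow_lt; lra).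
  assert (0 < exp t ^ k) by (apply pow_lt, exp_pos).
  field. lra.
Qed.

Lemma sum_f_R0_le_of_le (f : nat -> R) a b : (forall k, 0 <= f k) -> (a <= b)%nat ->
  sum_f_R0 f a <= sum_f_R0 f b.
Proof.
  intros Hf Hab. induction Hab as [|b Hab IH]; [lra|].
  rewrite tech5. pose proof (Hf (S b)). lra.
Qed.

Lemma sum_f_R0_window_le (f : nat -> R) c J n : (forall k, 0 <= f k) -> (c + J <= n)%nat ->
  sum_f_R0 (fun j => f (c + j)%nat) J <= sum_f_R0 f n.
Proof.
  intros Hf Hn. apply Rle_trans with (sum_f_R0 f (c + J)); [|now apply sum_f_R0_le_of_le].
  destruct c as [|c]; [apply Req_le, sum_eq; reflexivity|].
  rewrite (tech2 f c (S c + J)) by lia. replace (S c + J - S c)%nat with J by lia.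
  pose proof (cond_pos_sum f c Hf). lra.
Qed.

Lemma pow_one_minus_ge a J : 0 <= a <= 1 -> 1 - INR J * a <= (1 - a) ^ J.
Proof.
  intros Ha. induction J as [|J IH]; [simpl; lra|].
  rewrite S_INR. simpl. pose proof (pos_INR J).
  assert (0 <= (1 - a) ^ J) by (apply pow_le; lra). nra.
Qed.

Lemma exists_nat_floor x : 0 <= x -> exists J : nat, INR J <= x < INR J + 1.
Proof.
  intros Hx. destruct (archimed x) as [H1 H2].
  assert (Hz : (1 <= up x)%Z) by (assert (0 < up x)%Z by (apply lt_IZR; lra); lia).
  exists (Z.to_nat (up x - 1)).
  rewrite INR_IZR_INZ, Z2Nat.id by lia. rewrite minus_IZR. simpl. lra.
Qed.

Section LocalBound.

Variables (n : nat) (r : R).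
Hypothesis Hr : 0 < r < 1.

Let v := INR n * r * (1 - r).
Let P := binom_pmf n r.

Lemma binom_pmf_step_down i c : (i < n)%nat -> 0 <= c ->
  c * (INR (n - i) * r) <= INR (S i) * (1 - r) -> c * P (S i) <= P i.
Proof.
  intros Hi Hc Hratio.
  assert (Hpos : 0 < INR (n - i) * r) by (apply Rmult_lt_0_compat; [apply lt_0_INR; lia | lra]).
  assert (HP : 0 <= P (S i)) by (apply binom_pmf_nonneg; lra).
  apply Rmult_le_reg_r with (INR (n - i) * r); [exact Hpos|].
  replace (P i * (INR (n - i) * r)) with (P (S i) * INR (S i) * (1 - r))
    by (unfold P; rewrite binom_pmf_succ by exact Hi; ring).
  nra.
Qed.

Lemma var_le_mean : v <= INR n * r.
Proof. unfold v. pose proof (pos_INR n). nra. Qed.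

Lemma binom_pmf_decay_down m J : (m <= n)%nat -> INR n * r <= INR m -> 0 < v -> INR J <= v ->
  forall j, (j <= J)%nat -> (1 - INR J / v) ^ j * P m <= P (m - j).
Proof.
  intros Hm Hmean Hv HJ.
  set (a := INR J / v).
  assert (Hav : a * v = INR J) by (unfold a; field; lra).
  assert (Ha : 0 <= a <= 1) by (pose proof (pos_INR J); split; apply Rmult_le_reg_r with v; lra).
  assert (HJm : (J <= m)%nat) by (apply INR_le; pose proof var_le_mean; lra).
  induction j as [|j IH]; intros Hj; [rewrite Nat.sub_0_r; simpl; lra|].
  set (i := (m - S j)%nat).
  assert (Hi : S i = (m - j)%nat) by (unfold i; lia).
  assert (HjJ : INR (S j) <= INR J) by (apply le_INR; lia).
  assert (Hstep : (1 - a) * P (S i) <= P i).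
  { apply binom_pmf_step_down; [unfold i; lia | lra |].
    rewrite Hi. unfold i. rewrite !minus_INR by lia. rewrite S_INR in *.
    (* with m >= n r and j + 1 <= J this reduces to -J^2 r / v <= 0 *)
    assert (0 <= a * INR J * r) by (apply Rmult_le_pos; [apply Rmult_le_pos; [lra | apply pos_INR] | lra]).
    assert ((1 - a) * ((INR n - (INR m - (INR j + 1))) * r) <= (1 - a) * ((INR n * (1 - r) + INR J) * r))
      by (apply Rmult_le_compat_l; [lra | apply Rmult_le_compat_r; lra]).
    assert ((INR n * r - INR J) * (1 - r) <= (INR m - INR j) * (1 - r))
      by (apply Rmult_le_compat_r; lra).
    unfold v in Hav. nra. }
  specialize (IH ltac:(lia)). rewrite <- Hi in IH. simpl pow.
  apply Rle_trans with ((1 - a) * P (S i)); [|exact Hstep].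
  rewrite Rmult_assoc. apply Rmult_le_compat_l; lra.
Qed.

Lemma binom_pmf_above_mean_le m : 1 <= v -> (m <= n)%nat -> INR n * r <= INR m ->
  P m * sqrt v <= 2 * sqrt 2.
Proof.
  intros Hv Hm Hmean.
  destruct (exists_nat_floor (sqrt (v / 2)) (sqrt_pos _)) as [J [HJlo HJhi]].
  pose proof (pos_INR J) as HJ0.
  assert (HJ2 : INR J * INR J <= v / 2)
    by (rewrite <- (sqrt_sqrt (v / 2)) by lra; apply Rmult_le_compat; lra).
  assert (HJv : INR J <= v) by nra.
  assert (HJm : (J <= m)%nat) by (apply INR_le; pose proof var_le_mean; lra).
  assert (Hhalf : forall j, (j <= J)%nat -> P m / 2 <= P (m - j)).
  { intros j Hj.
    pose proof (binom_pmf_decay_down m J Hm Hmean ltac:(lra) HJv j Hj) as Hdec.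
    pose proof (pow_one_minus_ge (INR J / v) j) as Hbern.
    assert (Hjv : INR j * (INR J / v) <= 1 / 2).
    { apply Rle_trans with (INR J * (INR J / v)).
      - apply Rmult_le_compat_r; [apply Rmult_le_pos; [lra | left; apply Rinv_0_lt_compat; lra]|].
        now apply le_INR.
      - apply Rmult_le_reg_r with v; [lra|]. field_simplify; lra. }
    assert (HP : 0 <= P m) by (apply binom_pmf_nonneg; lra).
    assert (Ha : 0 <= INR J / v <= 1) by (split; apply Rmult_le_reg_r with v; field_simplify; lra).
    specialize (Hbern Ha). nra. }
  assert (Hsum : P m / 2 * INR (S J) <= 1).
  { rewrite <- sum_cte, <- (binom_pmf_sum n r).
    apply Rle_trans with (sum_f_R0 (fun j => P (m - J + j)%nat) J).
    - apply sum_Rle. intros j Hj. replace (m - J + j)%nat with (m - (J - j))%nat.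
      + apply Hhalf; lia.
      + lia.
    - apply sum_f_R0_window_le; [intros; apply binom_pmf_nonneg; lra | lia]. }
  rewrite S_INR in Hsum.
  assert (HP : 0 <= P m) by (apply binom_pmf_nonneg; lra).
  assert (Hhalfsqrt : P m * sqrt (v / 2) <= 2) by nra.
  replace v with (2 * (v / 2)) at 1 by field.
  rewrite sqrt_mult by lra. pose proof (sqrt_pos 2). nra.
Qed.

End LocalBound.

Lemma binom_pmf_le n r k : 0 < r < 1 -> 1 <= INR n * r * (1 - r) -> (k <= n)%nat ->
  binom_pmf n r k * sqrt (INR n * r * (1 - r)) <= 2 * sqrt 2.
Proof.
  intros Hr Hv Hk.
  destruct (Rle_dec (INR n * r) (INR k)) as [Hup|Hdown]; [now apply binom_pmf_above_mean_le|].
  rewrite binom_pmf_sym by exact Hk.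
  replace (INR n * r * (1 - r)) with (INR n * (1 - r) * (1 - (1 - r))) in * by ring.
  apply binom_pmf_above_mean_le; [lra | exact Hv | lia |].
  rewrite minus_INR by exact Hk. lra.
Qed.

Lemma tilt_var_ge r t : 0 < r < 1 -> 0 < t <= 1 / 2 ->
  0 < tilt r t < 1 /\ r * (1 - r) / 2 <= tilt r t * (1 - tilt r t).
Proof.
  intros Hr Ht. unfold tilt.
  assert (He1 : 1 < exp t) by (rewrite <- exp_0; apply exp_increasing; lra).
  assert (He2 : exp t <= 2).
  { assert (exp (1 / 2) * exp (1 / 2) = exp 1) by (rewrite <- exp_plus; f_equal; lra).
    pose proof exp_le_3. pose proof (exp_pos (1 / 2)).
    apply Rle_trans with (exp (1 / 2)); [apply exp_le_compat; lra | nra]. }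
  set (e := exp t) in *. set (D := r * e + (1 - r)).
  assert (HD : 1 <= D <= e) by (unfold D; nra).
  replace (1 - r * e / D) with ((1 - r) / D) by (unfold D in *; field; lra).
  assert (Hre : 0 < r * e) by nra.
  split; [split|].
  { apply Rdiv_lt_0_compat; lra. }
  { apply Rmult_lt_reg_r with D; [lra|].
    unfold Rdiv. rewrite Rmult_assoc, Rinv_l, Rmult_1_r, Rmult_1_l by lra. unfold D; lra. }
  replace (r * e / D * ((1 - r) / D)) with (r * (1 - r) * e / (D * D)) by (field; lra).
  apply Rmult_le_reg_r with (D * D); [nra|].
  replace (r * (1 - r) * e / (D * D) * (D * D)) with (r * (1 - r) * e) by (field; lra).
  assert (D * D <= 2 * e) by nra.
  assert (0 < r * (1 - r)) by nra. nra.
Qed.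

Lemma binom_pmf_tilt_le n r t k x : 0 < r < 1 -> 0 < t <= 1 / 2 ->
  2 <= x <= INR n * r * (1 - r) -> (k <= n)%nat ->
  binom_pmf n (tilt r t) k <= 4 / sqrt x.
Proof.
  intros Hr Ht Hx Hk.
  destruct (tilt_var_ge r t Hr Ht) as [Hr' Hvar].
  set (v' := INR n * tilt r t * (1 - tilt r t)).
  assert (Hv' : x <= 2 * v').
  { unfold v'. rewrite !Rmult_assoc. pose proof (pos_INR n). nra. }
  pose proof (binom_pmf_le n (tilt r t) k Hr' ltac:(fold v'; lra) Hk) as Hloc. fold v' in Hloc.
  assert (Hsqrt : sqrt x <= sqrt 2 * sqrt v').
  { rewrite <- sqrt_mult by lra. now apply sqrt_le_1_alt. }
  assert (Hs2 : sqrt 2 * sqrt 2 = 2) by (apply sqrt_sqrt; lra).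
  assert (HP : 0 <= binom_pmf n (tilt r t) k) by (apply binom_pmf_nonneg; lra).
  assert (Hsx : 0 < sqrt x) by (apply sqrt_lt_R0; lra).
  pose proof (sqrt_pos 2). pose proof (sqrt_pos v').
  apply Rmult_le_reg_r with (sqrt x); [exact Hsx|].
  replace (4 / sqrt x * sqrt x) with 4 by (field; lra).
  apply Rle_trans with (binom_pmf n (tilt r t) k * (sqrt 2 * sqrt v')); [now apply Rmult_le_compat_l|].
  nra.
Qed.

Definition binom_tail (n : nat) (r b : R) : R :=
  sum_f_R0 (fun k => if Rle_dec b (INR k) then binom_pmf n r k else 0) n.

Lemma sum_binom_tail_cond n1 q1 n2 q2 a : sum_binom_tail n1 q1 n2 q2 a =
  sum_f_R0 (fun k1 => binom_pmf n1 q1 k1 * binom_tail n2 q2 (a - INR k1)) n1.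
Proof.
  apply sum_eq. intros k1 _. unfold binom_tail. rewrite scal_sum. apply sum_eq. intros k2 _.
  destruct (Rle_dec a (INR k1 + INR k2)), (Rle_dec (a - INR k1) (INR k2)); lra.
Qed.

Lemma sum_f_R0_swap (f : nat -> nat -> R) n m :
  sum_f_R0 (fun i => sum_f_R0 (fun j => f i j) m) n =
  sum_f_R0 (fun j => sum_f_R0 (fun i => f i j) n) m.
Proof.
  induction n as [|n IH]; [reflexivity|].
  cbn [sum_f_R0]. now rewrite IH, <- plus_sum.
Qed.

Lemma sum_binom_tail_comm n1 q1 n2 q2 a :
  sum_binom_tail n1 q1 n2 q2 a = sum_binom_tail n2 q2 n1 q1 a.
Proof.
  unfold sum_binom_tail. rewrite sum_f_R0_swap.
  apply sum_eq. intros k2 _. apply sum_eq. intros k1 _.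
  rewrite (Rplus_comm (INR k2)). ring.
Qed.

Lemma sum_exp_tail_le t b N : 0 < t ->
  sum_f_R0 (fun k => if Rle_dec b (INR k) then exp (- (t * INR k)) else 0) N
  <= exp (- (t * b)) / (1 - exp (- t)).
Proof.
  intros Ht. set (x := exp (- t)).
  assert (Hx : 0 < x < 1) by (split; [apply exp_pos | rewrite <- exp_0; apply exp_increasing; lra]).
  assert (Hpow : forall k, exp (- (t * INR k)) = x ^ k)
    by (intros k; unfold x; rewrite <- exp_mult_INR; f_equal; ring).
  assert (Hnonpos : forall b N, b <= 0 ->
    sum_f_R0 (fun k => if Rle_dec b (INR k) then exp (- (t * INR k)) else 0) N
    <= exp (- (t * b)) / (1 - x)).
  { intros b' M Hb'.
    apply Rle_trans with (sum_f_R0 (fun k => x ^ k) M).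
    { apply sum_Rle. intros k _. rewrite Hpow. destruct Rle_dec; [lra | apply pow_le; lra]. }
    rewrite tech3 by lra.
    assert (1 <= exp (- (t * b'))) by (rewrite <- exp_0; apply exp_le_compat; nra).
    assert (0 < x ^ S M) by (apply pow_lt; lra).
    unfold Rdiv. apply Rmult_le_compat_r; [left; apply Rinv_0_lt_compat |]; lra. }
  revert b. induction N as [|N IH]; intros b;
    (destruct (Rle_dec b 0) as [Hb|Hb]; [now apply Hnonpos|]).
  - simpl. destruct (Rle_dec b 0); [lra|].
    apply Rlt_le, Rdiv_lt_0_compat; [apply exp_pos | lra].
  - rewrite decomp_sum by lia. simpl pred.
    destruct (Rle_dec b (INR 0)) as [Hb0|_]; [simpl in Hb0; lra|].
    replace (exp (- (t * b))) with (x * exp (- (t * (b - 1))))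
      by (unfold x; rewrite <- exp_plus; f_equal; ring).
    rewrite Rplus_0_l.
    apply Rle_trans with
      (x * sum_f_R0 (fun k => if Rle_dec (b - 1) (INR k) then exp (- (t * INR k)) else 0) N).
    + apply Req_le. rewrite scal_sum. apply sum_eq. intros k _. rewrite !Hpow, S_INR.
      destruct (Rle_dec b (INR k + 1)), (Rle_dec (b - 1) (INR k)); simpl; first [ring | lra].
    + unfold Rdiv. rewrite Rmult_assoc. apply Rmult_le_compat_l; [lra | apply IH].
Qed.

Lemma binom_tail_le n r t b Pm : 0 <= r <= 1 -> 0 < t -> 0 <= Pm ->
  (forall k, (k <= n)%nat -> binom_pmf n (tilt r t) k <= Pm) ->
  binom_tail n r b <=
  (r * exp t + (1 - r)) ^ n * Pm * (exp (- (t * b)) / (1 - exp (- t))).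
Proof.
  intros Hr Ht HPm0 HPm.
  set (D := r * exp t + (1 - r)).
  assert (HD : 1 <= D)
    by (assert (1 < exp t) by (rewrite <- exp_0; apply exp_increasing; lra); unfold D; nra).
  assert (HDn : 0 <= D ^ n) by (apply pow_le; lra).
  apply Rle_trans with
    (sum_f_R0 (fun k => (if Rle_dec b (INR k) then exp (- (t * INR k)) else 0) * (D ^ n * Pm)) n).
  - apply sum_Rle. intros k Hk.
    destruct Rle_dec; [|lra].
    rewrite (binom_pmf_tilt n r t k Hk) by (fold D; lra). fold D.
    pose proof (exp_pos (- (t * INR k))).
    specialize (HPm k Hk).
    assert (D ^ n * binom_pmf n (tilt r t) k <= D ^ n * Pm) by (apply Rmult_le_compat_l; lra).
    nra.
  - rewrite <- scal_sum.
    apply Rmult_le_compat_l; [now apply Rmult_le_pos | now apply sum_exp_tail_le].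
Qed.

Lemma sum_binom_tail_le n1 r1 n2 r2 t a Pm : 0 <= r1 <= 1 -> 0 <= r2 <= 1 -> 0 < t -> 0 <= Pm ->
  (forall k, (k <= n2)%nat -> binom_pmf n2 (tilt r2 t) k <= Pm) ->
  sum_binom_tail n1 r1 n2 r2 a <=
  (r1 * exp t + (1 - r1)) ^ n1 * (r2 * exp t + (1 - r2)) ^ n2 * Pm *
  (exp (- (t * a)) / (1 - exp (- t))).
Proof.
  intros H1 H2 Ht HPm0 HPm. rewrite sum_binom_tail_cond.
  set (K := (r2 * exp t + (1 - r2)) ^ n2 * Pm * (exp (- (t * a)) / (1 - exp (- t)))).
  apply Rle_trans with (sum_f_R0 (fun k1 => binom_pmf n1 r1 k1 * exp (t * INR k1) * K) n1).
  - apply sum_Rle. intros k1 _. rewrite Rmult_assoc.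
    apply Rmult_le_compat_l; [now apply binom_pmf_nonneg|].
    eapply Rle_trans; [apply (binom_tail_le n2 r2 t (a - INR k1) Pm); assumption|].
    apply Req_le. unfold K.
    replace (- (t * (a - INR k1))) with (t * INR k1 + - (t * a)) by ring.
    rewrite exp_plus. unfold Rdiv. ring.
  - rewrite <- scal_sum, binom_mgf. apply Req_le. unfold K. ring.
Qed.

Lemma one_minus_exp_opp_ge t : 0 < t <= 1 -> t / 2 <= 1 - exp (- t).
Proof.
  intros Ht. pose proof (exp_ineq1_le t). rewrite exp_Ropp.
  assert (/ exp t <= / (1 + t)) by (apply Rinv_le_contravar; lra).
  assert (t / 2 <= 1 - / (1 + t)).
  { replace (1 - / (1 + t)) with (t / (1 + t)) by (field; lra).
    unfold Rdiv. apply Rmult_le_compat_l; [lra | apply Rinv_le_contravar; lra]. }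
  lra.
Qed.

Lemma centered_mgf_product_le n1 n2 p t h : 0 <= p <= 1 -> 0 <= t <= 1 ->
  (p * exp t + (1 - p)) ^ n1 * ((1 - p) * exp t + (1 - (1 - p))) ^ n2 *
  exp (- (t * (INR n1 * p + INR n2 * (1 - p) + h))) <=
  exp ((INR n1 + INR n2) * (p * (1 - p) * (t ^ 2 / 2 + t ^ 3)) - t * h).
Proof.
  intros Hp Ht.
  pose proof (binom_centered_mgf_le n1 p t Hp Ht) as M1.
  pose proof (binom_centered_mgf_le n2 (1 - p) t ltac:(lra) Ht) as M2.
  replace ((1 - p) * (1 - (1 - p))) with (p * (1 - p)) in M2 by ring.
  replace ((INR n1 + INR n2) * (p * (1 - p) * (t ^ 2 / 2 + t ^ 3)) - t * h)
    with (INR n1 * (p * (1 - p) * (t ^ 2 / 2 + t ^ 3)) +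
          INR n2 * (p * (1 - p) * (t ^ 2 / 2 + t ^ 3)) + - (t * h)) by ring.
  replace (- (t * (INR n1 * p + INR n2 * (1 - p) + h)))
    with (- (t * (INR n1 * p)) + - (t * (INR n2 * (1 - p))) + - (t * h)) by ring.
  rewrite !exp_plus.
  pose proof (exp_pos t). pose proof (exp_pos (- (t * h))).
  assert (0 <= (p * exp t + (1 - p)) ^ n1 * exp (- (t * (INR n1 * p))))
    by (apply Rmult_le_pos; [apply pow_le; nra | apply Rlt_le, exp_pos]).
  assert (0 <= ((1 - p) * exp t + (1 - (1 - p))) ^ n2 * exp (- (t * (INR n2 * (1 - p)))))
    by (apply Rmult_le_pos; [apply pow_le; nra | apply Rlt_le, exp_pos]).
  replace ((p * exp t + (1 - p)) ^ n1 * ((1 - p) * exp t + (1 - (1 - p))) ^ n2 *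
     (exp (- (t * (INR n1 * p))) * exp (- (t * (INR n2 * (1 - p)))) * exp (- (t * h))))
    with ((p * exp t + (1 - p)) ^ n1 * exp (- (t * (INR n1 * p))) *
          (((1 - p) * exp t + (1 - (1 - p))) ^ n2 * exp (- (t * (INR n2 * (1 - p))))) *
          exp (- (t * h))) by ring.
  apply Rmult_le_compat_r; [lra|]. now apply Rmult_le_compat.
Qed.

(** The tilt [t = h / (2 x)] is the optimal Chernoff parameter. *)
Lemma sum_binom_tail_centered_le n1 n2 p h x :
  0 < p < 1 -> x = p * (1 - p) * Npar n1 n2 -> 2 <= x -> 0 < h <= x ->
  sum_binom_tail n1 p n2 (1 - p) (INR n1 * p + INR n2 * (1 - p) + h)
  <= 16 * sqrt x / h * exp (- (h ^ 2) / (4 * x) + h ^ 3 / (4 * x ^ 2)).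
Proof.
  intros Hp Hx Hx2 Hh. unfold Npar in Hx.
  set (t := h / (2 * x)).
  assert (Ht : 0 < t <= 1 / 2)
    by (unfold t; split; [apply Rdiv_lt_0_compat | apply Rmult_le_reg_r with (2 * x); field_simplify]; lra).
  set (a := INR n1 * p + INR n2 * (1 - p) + h).
  assert (Hsx : 0 < sqrt x) by (apply sqrt_lt_R0; lra).
  set (Pm := 4 / sqrt x).
  assert (HPm : 0 <= Pm) by (apply Rlt_le, Rdiv_lt_0_compat; lra).
  assert (Hloc : forall n r, r * (1 - r) = p * (1 - p) -> (INR n1 + INR n2) / 2 <= INR n ->
      forall k, (k <= n)%nat -> binom_pmf n (tilt r t) k <= Pm).
  { intros n r Hr Hn k Hk.
    assert (Hpq : 0 < p * (1 - p)) by nra.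
    apply binom_pmf_tilt_le; [split; nra | exact Ht | split; [lra|] | exact Hk].
    rewrite Rmult_assoc, Hr, Hx, Rmult_comm. apply Rmult_le_compat_r; lra. }
  set (M := (p * exp t + (1 - p)) ^ n1 * ((1 - p) * exp t + (1 - (1 - p))) ^ n2).
  assert (Hchernoff : sum_binom_tail n1 p n2 (1 - p) a <=
                      M * Pm * (exp (- (t * a)) / (1 - exp (- t)))).
  { destruct (Nat.le_gt_cases n1 n2) as [Hle|Hlt].
    - apply sum_binom_tail_le; try lra.
      apply Hloc; [ring|]. apply le_INR in Hle. lra.
    - rewrite sum_binom_tail_comm. unfold M. rewrite (Rmult_comm ((p * exp t + _) ^ n1)).
      apply sum_binom_tail_le; try lra.
      apply Hloc; [reflexivity|]. assert (INR n2 <= INR n1) by (apply le_INR; lia). lra. }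
  assert (Hmgf : M * exp (- (t * a)) <= exp (- (h ^ 2) / (4 * x) + h ^ 3 / (4 * x ^ 2))).
  { eapply Rle_trans; [apply centered_mgf_product_le; lra|]. right. f_equal.
    replace (INR n1 + INR n2) with (2 * (x / (p * (1 - p)))) by (rewrite Hx; field; lra).
    unfold t. field. split; lra. }
  pose proof (one_minus_exp_opp_ge t ltac:(lra)) as Hgap.
  assert (HM : 0 <= M * exp (- (t * a)))
    by (apply Rmult_le_pos; [unfold M; apply Rmult_le_pos; apply pow_le; pose proof (exp_pos t); nra
                            | apply Rlt_le, exp_pos]).
  eapply Rle_trans; [exact Hchernoff|].
  replace (M * Pm * (exp (- (t * a)) / (1 - exp (- t))))
    with (M * exp (- (t * a)) * (Pm / (1 - exp (- t)))) by (field; lra).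
  replace (16 * sqrt x / h) with (Pm / (t / 2))
    by (unfold Pm, t; rewrite <- (sqrt_sqrt x) at 2 by lra; field; lra).
  rewrite Rmult_comm. apply Rmult_le_compat; try assumption.
  - apply Rmult_le_pos; [assumption | apply Rlt_le, Rinv_0_lt_compat; lra].
  - unfold Rdiv. apply Rmult_le_compat_l; [assumption | apply Rinv_le_contravar; lra].
Qed.

Lemma Un_cv_cube_div4 (u : nat -> R) : Un_cv u 0 -> Un_cv (fun m => u m ^ 3 / 4) 0.
Proof.
  intros Hu.
  assert (Hc : Un_cv (fun _ => / 4) (/ 4))
    by (intros e He; exists O; intros; unfold R_dist; rewrite Rminus_diag, Rabs_R0; lra).
  pose proof (CV_mult _ _ _ _ (CV_mult _ _ _ _ (CV_mult _ _ _ _ Hu Hu) Hu) Hc) as H.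
  rewrite !Rmult_0_l in H.
  intros e He. destruct (H e He) as [N HN]. exists N. intros m Hm.
  replace (u m ^ 3 / 4) with (u m * u m * u m * / 4) by (simpl; field).
  exact (HN m Hm).
Qed.

Lemma Rpower_two_thirds_cube x : 0 < x -> Rpower x (2 / 3) ^ 3 = x ^ 2.
Proof.
  intros Hx. rewrite <- Rpower_pow by apply exp_pos.
  rewrite Rpower_mult, <- Rpower_pow by exact Hx. f_equal. simpl. field.
Qed.

Lemma sqrt2_exp3_gt_16 : 16 < sqrt 2 * exp 3.
Proof.
  assert (Hexp : 12 < exp 3).
  { replace 3 with (INR 12 * (1 / 4)) by (simpl; field). rewrite exp_mult_INR.
    apply Rlt_le_trans with ((1 + 1 / 4) ^ 12); [simpl; lra|].
    apply pow_incr. split; [lra | apply exp_ineq1_le]. }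
  assert (Hsqrt : 1.4 < sqrt 2).
  { rewrite <- (sqrt_square 1.4) by lra. apply sqrt_lt_1_alt. lra. }
  nra.
Qed.

Lemma tail_constant_lt x h A B : 0 < x -> 0 < h ->
  16 * sqrt x / h * exp (A + B) < sqrt (2 * x) / h * exp (A + 3 + B).
Proof.
  intros Hx Hh.
  replace (A + 3 + B) with ((A + B) + 3) by ring.
  rewrite (exp_plus (A + B) 3), sqrt_mult by lra.
  assert (0 < sqrt x / h * exp (A + B))
    by (apply Rmult_lt_0_compat; [apply Rdiv_lt_0_compat; [apply sqrt_lt_R0 |] | apply exp_pos]; lra).
  pose proof sqrt2_exp3_gt_16.
  replace (16 * sqrt x / h * exp (A + B)) with (16 * (sqrt x / h * exp (A + B))) by (field; lra).
  replace (sqrt 2 * sqrt x / h * (exp (A + B) * exp 3))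
    with (sqrt 2 * exp 3 * (sqrt x / h * exp (A + B))) by (field; lra).
  now apply Rmult_lt_compat_r.
Qed.

Lemma sum_binom_tail_lt n1 n2 p h : 0 <= p <= 1 ->
  2 < p * (1 - p) * Npar n1 n2 -> 0 < h ->
  Rabs (h / Rpower (p * (1 - p) * Npar n1 n2) (2 / 3)) < 1 ->
  sum_binom_tail n1 p n2 (1 - p) (INR n1 * p + INR n2 * (1 - p) + h)
  < sqrt (2 * p * (1 - p) * Npar n1 n2) / h *
    exp (- (h ^ 2) / (4 * p * (1 - p) * Npar n1 n2) + 3 +
         (h / Rpower (p * (1 - p) * Npar n1 n2) (2 / 3)) ^ 3 / 4).
Proof.
  intros Hp Hx Hh Hsmall.
  set (x := p * (1 - p) * Npar n1 n2) in *.
  assert (Hp01 : 0 < p < 1).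
  { unfold x in Hx. split; apply Rnot_le_lt; intros Hle;
      [replace p with 0 in Hx by lra | replace p with 1 in Hx by lra]; lra. }
  assert (HR : 0 < Rpower x (2 / 3)) by apply exp_pos.
  assert (HRx : Rpower x (2 / 3) <= x)
    by (rewrite <- (Rpower_1 x) at 2 by lra; apply Rle_Rpower; lra).
  assert (Hhx : h <= x).
  { apply Rabs_def2 in Hsmall as [Hlt _].
    apply Rmult_lt_compat_r with (r := Rpower x (2 / 3)) in Hlt; [|exact HR].
    unfold Rdiv in Hlt. rewrite Rmult_assoc, Rinv_l, Rmult_1_r, Rmult_1_l in Hlt by lra. lra. }
  replace ((h / Rpower x (2 / 3)) ^ 3 / 4) with (h ^ 3 / (4 * x ^ 2))
    by (unfold Rdiv; rewrite Rpow_mult_distr, pow_inv, Rpower_two_thirds_cube by lra; field; lra).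
  replace (2 * p * (1 - p) * Npar n1 n2) with (2 * x) by (unfold x; ring).
  replace (4 * p * (1 - p) * Npar n1 n2) with (4 * x) by (unfold x; ring).
  eapply Rle_lt_trans.
  - apply (sum_binom_tail_centered_le n1 n2 p h x); [exact Hp01 | reflexivity | lra | split; lra].
  - apply tail_constant_lt; lra.
Qed.

Theorem mainTheorem12 (n1 n2 : nat -> nat) (p h : nat -> R) :
  (forall m, 0 <= p m <= 1) ->
  cv_infty (fun m => Npar (n1 m) (n2 m)) ->
  cv_infty (fun m => p m * (1 - p m) * Npar (n1 m) (n2 m)) ->
  (exists M, forall m, (M <= m)%nat ->
     2 * sqrt (2 * p m * (1 - p m) * Npar (n1 m) (n2 m)) < h m) ->
  Un_cv (fun m => h m / Rpower (p m * (1 - p m) * Npar (n1 m) (n2 m)) (2 / 3)) 0 ->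
  Un_cv (fun m => Spar (n1 m) (n2 m) * h m /
            (Npar (n1 m) (n2 m) * sqrt (p m * (1 - p m) * Npar (n1 m) (n2 m)))) 0 ->
  exists eps : nat -> R, Un_cv eps 0 /\
    exists M, forall m, (M <= m)%nat ->
      sum_binom_tail (n1 m) (p m) (n2 m) (1 - p m)
        (INR (n1 m) * p m + INR (n2 m) * (1 - p m) + h m)
      < sqrt (2 * p m * (1 - p m) * Npar (n1 m) (n2 m)) / h m *
        exp (- (h m ^ 2) / (4 * p m * (1 - p m) * Npar (n1 m) (n2 m)) + 3 + eps m).
Proof.
  (* The bound is uniform in [N] and [S]: only [h > 0], [p (1 - p) N > 2]
     and [h = o((p (1 - p) N)^(2/3))] are needed. *)
  intros Hp _ Hvar [M0 Hh] Hcv _.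
  exists (fun m => (h m / Rpower (p m * (1 - p m) * Npar (n1 m) (n2 m)) (2 / 3)) ^ 3 / 4).
  split; [exact (Un_cv_cube_div4 _ Hcv)|].
  destruct (Hvar 2) as [M1 HM1].
  destruct (Hcv 1 Rlt_0_1) as [M2 HM2].
  exists (M0 + M1 + M2)%nat. intros m Hm.
  apply sum_binom_tail_lt.
  - apply Hp.
  - apply HM1. lia.
  - pose proof (sqrt_pos (2 * p m * (1 - p m) * Npar (n1 m) (n2 m))).
    specialize (Hh m ltac:(lia)). lra.
  - specialize (HM2 m ltac:(lia)). unfold R_dist in HM2. now rewrite Rminus_0_r in HM2.
Qed.
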